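(* Let $\theta_0,\theta_1\in\mathbb{R}$ and put $\theta_\star=-\dfrac{\theta_0+\theta_1}{2}$, $\theta_\star^0=\theta_\star-\theta_0$, $\theta_\star^1=\theta_\star-\theta_1$. Define the $2\times 2$ real matrix $\mathbf{A}=(A_{ij})$ by $$\begin{pmatrix}A_{11}\\ A_{21}\end{pmatrix}=\begin{pmatrix}\cos\theta_0 & -\sin\theta_0\\ \sin\theta_0 & \cos\theta_0\end{pmatrix}\begin{pmatrix}\operatorname{sinc}\theta_\star^0\\ \operatorname{cosc}\theta_\star^0\end{pmatrix},\qquad \begin{pmatrix}A_{12}\\ A_{22}\end{pmatrix}=\begin{pmatrix}\cos\theta_1 & -\sin\theta_1\\ \sin\theta_1 & \cos\theta_1\end{pmatrix}\begin{pmatrix}\operatorname{sinc}\theta_\star^1\\ \operatorname{cosc}\theta_\star^1\end{pmatrix}.$$ Consider the nonlinear system in the unknowns $(s,t,\kappa_0,\kappa_1)\in\mathbb{R}^4$ with $s>0$, $t>0$: $$\begin{cases} \big(\cos\theta_0\operatorname{sinc}(s\kappa_0)-\sin\theta_0\operatorname{cosc}(s\kappa_0)\big)s+\big(\cos\theta_1\operatorname{sinc}(-t\kappa_1)-\sin\theta_1\operatorname{cosc}(-t\kappa_1)\big)t=1,\\ \big(\sin\theta_0\operatorname{sinc}(s\kappa_0)+\cos\theta_0\operatorname{cosc}(s\kappa_0)\big)s+\big(\sin\theta_1\operatorname{sinc}(-t\kappa_1)+\cos\theta_1\operatorname{cosc}(-t\kappa_1)\big)t=0,\\ \theta_0+s\kappa_0=\theta_\star,\\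 \theta_1-t\kappa_1=\theta_\star. \end{cases}$$ Then a quadruple $(s,t,\kappa_0,\kappa_1)$ with $s>0$, $t>0$ solves this nonlinear system if and only if $(s,t)$ solves the linear system $\mathbf{A}\begin{pmatrix}s\\ t\end{pmatrix}=\begin{pmatrix}1\\ 0\end{pmatrix}$ and $\kappa_0=\theta_\star^0/s$, $\kappa_1=-\theta_\star^1/t$.
   Context: The functions $\operatorname{sinc}$ and $\operatorname{cosc}$ are defined for real $x\neq 0$ by $\operatorname{sinc}x=\dfrac{\sin x}{x}$ and $\operatorname{cosc}x=\dfrac{1-\cos x}{x}$, and extended continuously to $x=0$ by $\operatorname{sinc}0=1$, $\operatorname{cosc}0=0$. The nonlinear system is the ''standard form'' of the biarc $G^1$ Hermite interpolation problem (after roto-translating and scaling so that the endpoints are $(0,0)$ and $(1,0)$): $s,t$ are the normalized lengths of the two circular arcs, $\kappa_0,\kappa_1$ their normalized curvatures, $\theta_0,\theta_1$ the prescribed initial and final tangent angles, and $\theta_\star$ the prescribed tangent angle at the joint point. *)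

From Stdlib Require Import Reals.
Open Scope R_scope.

Definition sinc (x : R) : R := if Req_EM_T x 0 then 1 else sin x / x.
Definition cosc (x : R) : R := if Req_EM_T x 0 then 0 else (1 - cos x) / x.

Definition theta_star (th0 th1 : R) : R := - (th0 + th1) / 2.

Definition A11 (th0 th1 : R) : R :=
  cos th0 * sinc (theta_star th0 th1 - th0) - sin th0 * cosc (theta_star th0 th1 - th0).
Definition A21 (th0 th1 : R) : R :=
  sin th0 * sinc (theta_star th0 th1 - th0) + cos th0 * cosc (theta_star th0 th1 - th0).
Definition A12 (th0 th1 : R) : R :=
  cos th1 * sinc (theta_star th0 th1 - th1) - sin th1 * cosc (theta_star th0 th1 - th1).
Definition A22 (th0 th1 : R) : R :=
  sin th1 * sinc (theta_star th0 th1 - th1) + cos th1 * cosc (theta_star th0 th1 - th1).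

Definition nonlinear_system (th0 th1 s t k0 k1 : R) : Prop :=
  (cos th0 * sinc (s * k0) - sin th0 * cosc (s * k0)) * s
    + (cos th1 * sinc (- (t * k1)) - sin th1 * cosc (- (t * k1))) * t = 1 /\
  (sin th0 * sinc (s * k0) + cos th0 * cosc (s * k0)) * s
    + (sin th1 * sinc (- (t * k1)) + cos th1 * cosc (- (t * k1))) * t = 0 /\
  th0 + s * k0 = theta_star th0 th1 /\
  th1 - t * k1 = theta_star th0 th1.

Definition linear_system (th0 th1 s t : R) : Prop :=
  A11 th0 th1 * s + A12 th0 th1 * t = 1 /\
  A21 th0 th1 * s + A22 th0 th1 * t = 0.

From Stdlib Require Import Reals Lra.
Open Scope R_scope.

(* Once the two angle equations hold, the arguments [s k0] and [- (t k1)] of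
   sinc and cosc are the constants [theta_star - th0] and [theta_star - th1],
   so the two closure equations become the linear system; the curvatures are
   then recovered by dividing by the (positive) arc lengths. *)

Lemma mul_eq_iff_eq_div (s k a : R) : s <> 0 -> (s * k = a <-> k = a / s).
Proof.
  intros Hs; split; intros E.
  - rewrite <- E; field; exact Hs.
  - rewrite E; field; exact Hs.
Qed.

Lemma nonlinear_system_iff_angles (th0 th1 s t k0 k1 : R) :
  nonlinear_system th0 th1 s t k0 k1 <->
  linear_system th0 th1 s t /\
  s * k0 = theta_star th0 th1 - th0 /\
  - (t * k1) = theta_star th0 th1 - th1.
Proof.
  unfold nonlinear_system, linear_system, A11, A12, A21, A22.
  split.
  - intros (E1 & E2 & E3 & E4).
    assert (Ha : s * k0 = theta_star th0 th1 - th0) by lra.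
    assert (Hb : - (t * k1) = theta_star th0 th1 - th1) by lra.
    rewrite Ha, Hb in E1, E2.
    tauto.
  - intros ((L1 & L2) & Ha & Hb).
    rewrite Ha, Hb.
    repeat split; auto; lra.
Qed.

Theorem lemma1 (th0 th1 s t k0 k1 : R) :
  0 < s -> 0 < t ->
  (nonlinear_system th0 th1 s t k0 k1 <->
   (linear_system th0 th1 s t /\
    k0 = (theta_star th0 th1 - th0) / s /\
    k1 = - (theta_star th0 th1 - th1) / t)).
Proof.
  intros Hs Ht.
  rewrite nonlinear_system_iff_angles.
  assert (Hk1 : - (t * k1) = theta_star th0 th1 - th1 <->
                t * k1 = - (theta_star th0 th1 - th1)) by lra.
  rewrite Hk1, !mul_eq_iff_eq_div by lra.
  tauto.
Qed.
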